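(* For every positive integer $k$ there exists $n_0$ such that for all $n\ge n_0$, $$\mathrm{exa}_k(n,K_3)=\left\lfloor \frac{(n-1)^2}{4}\right\rfloor+k+1.$$
   Context: For a graph $H$ and a graph $F$, $\mathcal N(H,F)$ denotes the number of subgraphs of $H$ isomorphic to $F$. For a nonnegative integer $k$, $\mathrm{exa}_k(n,F)$ is the largest number of edges of a simple graph $H$ on $n$ vertices with $\mathcal N(H,F)=k$. $K_3$ is the triangle. *)

From mathcomp Require Import all_boot.
Set Implicit Arguments. Unset Strict Implicit. Unset Printing Implicit Defensive.

Definition simple_graph (n : nat) (E : {set {set 'I_n}}) : bool :=
  [forall e in E, #|e| == 2].

Definition nedges (n : nat) (E : {set {set 'I_n}}) : nat := #|E|.

(* N(H, K_3): number of subgraphs of H isomorphic to the triangle K_3,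
   i.e. the number of 3-element vertex sets all of whose 2-subsets are edges. *)
Definition ntriangles (n : nat) (E : {set {set 'I_n}}) : nat :=
  #|[set T : {set 'I_n} | (#|T| == 3) &&
       [forall e : {set 'I_n}, ((e \subset T) && (#|e| == 2)) ==> (e \in E)]]|.

(* exa_k(n, K_3): the largest number of edges of a simple graph on n vertices
   with exactly k triangles (0 if there is no such graph). *)
Definition exa_K3 (k n : nat) : nat :=
  \max_(E : {set {set 'I_n}} | simple_graph E && (ntriangles E == k)) nedges E.

(* Let a graph on n vertices have t >= 1 triangles and let xyz be one of them.
   Deleting x, y, z removes d(x) + d(y) + d(z) - 3 edges. A common neighbour of
   two of x, y, z spans a triangle with them, and any two of the families of
   triangles through xy, xz, yz share only xyz, so d(x) + d(y) + d(z) <= n + t + 2.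
   The remaining graph has fewer triangles; induction, or Mantel's theorem (proved
   the same way by deleting an edge) when no triangle is left, bounds its size, and
   the total is at most floor((n-1)^2/4) + t + 1 as long as 3t + 4 <= n.
   The bound is attained by a complete bipartite graph with parts of sizes
   floor((n-1)/2) and ceil((n-1)/2) plus one vertex joined to a vertex u of the
   first part and to k vertices of the second: its triangles all contain u and the
   new vertex. *)

From mathcomp Require Import all_boot zify.
Set Implicit Arguments. Unset Strict Implicit. Unset Printing Implicit Defensive.

Lemma sqr_sub2_div4 m : 2 <= m -> (m - 2) ^ 2 %/ 4 + (m - 1) = m ^ 2 %/ 4.
Proof. by move=> m_ge2; rewrite !expnS expn0 !muln1; nia. Qed.

Lemma sqr_sub4_div4_le m j : 3 * j + 4 <= m ->
  (m - 4) ^ 2 %/ 4 + 2 * j + m - 1 <= (m - 1) ^ 2 %/ 4 + j + 1.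
Proof. by move=> m_ge; rewrite !expnS expn0 !muln1; nia. Qed.

Lemma half_mul_uphalf_sub m : m %/ 2 * (m - m %/ 2) = m ^ 2 %/ 4.
Proof. by rewrite !expnS expn0 !muln1; nia. Qed.

Section FinsetCard.
Variable T : finType.
Implicit Types (A B C S : {set T}) (a b c x y z : T).

Lemma cardsU3 A B C :
  #|A :|: B :|: C| + #|A :&: B| + #|A :&: C| + #|B :&: C| =
  #|A| + #|B| + #|C| + #|A :&: B :&: C|.
Proof.
have := cardsUI (A :|: B) C; have := cardsUI A B.
have := cardsUI (A :&: C) (B :&: C).
rewrite -setIUl setIACA setIid setIAC; lia.
Qed.

Lemma set2_inj x : injective (fun y => [set x; y]).
Proof.
move=> y1 y2 /= eq12; have /set2P[y1x|//] : y1 \in [set x; y2] by rewrite -eq12 set22.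
have /set2P[y2x|->//] : y2 \in [set x; y1] by rewrite eq12 set22.
by rewrite y1x y2x.
Qed.

Lemma cards3 a b c : a != b -> a != c -> b != c -> #|[set a; b; c]| = 3.
Proof.
move=> ab ac bc; rewrite -setUA cardsU1 cards2 bc !inE.
by rewrite (negbTE ab) (negbTE ac).
Qed.

Lemma cards3P S :
  reflect (exists x y z, [/\ x != y, x != z, y != z & S = [set x; y; z]]) (#|S| == 3).
Proof.
apply: (iffP eqP) => [S3|[x [y [z [xy xz yz ->]]]]]; last exact: cards3.
have /card_gt0P[x xS] : 0 < #|S| by rewrite S3.
have /cards2P[y [z [yz Sx]]] : #|S :\ x| == 2.
  by move: S3; rewrite (cardsD1 x) xS add1n => -[->].
have /setD1P[yx _] : y \in S :\ x by rewrite Sx set21.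
have /setD1P[zx _] : z \in S :\ x by rewrite Sx set22.
by exists x, y, z; rewrite eq_sym yx eq_sym zx yz -setUA -Sx setD1K.
Qed.

Lemma eq_set3_card S x y z : #|S| <= 3 -> x \in S -> y \in S -> z \in S ->
  x != y -> x != z -> y != z -> S = [set x; y; z].
Proof.
move=> S_le3 xS yS zS xy xz yz; apply/esym/eqP.
rewrite eqEcard cards3 // S_le3 andbT.
by apply/subsetP=> w; rewrite !inE -orbA => /or3P[] /eqP->.
Qed.

Lemma exists_subset_card A m : m <= #|A| -> exists2 B : {set T}, B \subset A & #|B| = m.
Proof.
case/card_geqP=> s [s_uniq s_size sA]; exists [set x in s].
  by apply/subsetP=> x; rewrite inE => /sA.
by rewrite cardsE (card_uniqP s_uniq).
Qed.

End FinsetCard.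

Section Graphs.
Variable T : finType.
Implicit Types (E : {set {set T}}) (S V X Y e : {set T}) (x y z : T).

Definition simple E := {in E, forall e, #|e| = 2}.
Definition edges_within E V := {in E, forall e, e \subset V}.
Definition nbr E x := [set y | [set x; y] \in E].
Definition edges_at E x := [set e in E | x \in e].
Definition edges_meeting E X := [set e in E | ~~ [disjoint e & X]].
Definition del_vertices E X := [set e in E | [disjoint e & X]].
Definition triangles E := [set S : {set T} | (#|S| == 3) &&
  [forall e : {set T}, ((e \subset S) && (#|e| == 2)) ==> (e \in E)]].
Definition triangles_at E x y := [set S in triangles E | [set x; y] \subset S].

Section SimpleGraph.
Variable E : {set {set T}}.
Hypothesis simpleE : simple E.

Lemma edge_neq x y : [set x; y] \in E -> x != y.
Proof. by move/simpleE; rewrite cards2; case: (x != y). Qed.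

Lemma edges_atI x y : [set x; y] \in E ->
  edges_at E x :&: edges_at E y = [set [set x; y]].
Proof.
move=> Exy; apply/setP=> e; rewrite !inE; apply/idP/eqP=> [|->]; last first.
  by rewrite Exy set21 set22.
case/andP=> /andP[Ee xe] /andP[_ ye]; apply/esym/eqP.
rewrite eqEcard simpleE // cards2 edge_neq // andbT.
by apply/subsetP=> w /set2P[]->.
Qed.

Lemma card_edges_at x : #|edges_at E x| = #|nbr E x|.
Proof.
suff -> : edges_at E x = [set [set x; y] | y in nbr E x].
  by rewrite card_imset //; apply: set2_inj.
apply/setP=> e; rewrite inE; apply/andP/imsetP=> [[Ee xe]|[y]]; last first.
  by rewrite inE => Exy ->; rewrite Exy set21.
have /eqP/cards2P[a [b [_ eab]]] := simpleE Ee; move: xe Ee; rewrite eab.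
by case/set2P=> <- Eab; [exists b | exists a]; rewrite ?inE // setUC.
Qed.

End SimpleGraph.

Lemma nbr_sub E V x : edges_within E V -> nbr E x \subset V.
Proof.
by move=> EV; apply/subsetP=> y; rewrite inE => /EV/subsetP; apply; rewrite set22.
Qed.

Lemma edges_meeting1 E x : edges_meeting E [set x] = edges_at E x.
Proof. by apply/setP=> e; rewrite !inE disjoint_sym disjoints1 negbK. Qed.

Lemma edges_meetingU E X Y :
  edges_meeting E (X :|: Y) = edges_meeting E X :|: edges_meeting E Y.
Proof. by apply/setP=> e; rewrite !inE -!setI_eq0 setIUr setU_eq0 negb_and andb_orr. Qed.

Lemma card_del_vertices E X : #|E| = #|del_vertices E X| + #|edges_meeting E X|.
Proof.
rewrite -(cardsID [set e : {set T} | [disjoint e & X]] E).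
by congr (_ + _); apply: eq_card => e; rewrite !inE andbC.
Qed.

Lemma del_vertices_simple E X : simple E -> simple (del_vertices E X).
Proof. by move=> simpleE e; rewrite inE => /andP[/simpleE]. Qed.

Lemma del_vertices_within E V X :
  edges_within E V -> edges_within (del_vertices E X) (V :\: X).
Proof. by move=> EV e; rewrite inE => /andP[/EV eV eX]; rewrite subsetD eV. Qed.

Lemma del_vertices_triangles E X : triangles (del_vertices E X) \subset triangles E.
Proof.
apply/subsetP=> S; rewrite !inE => /andP[-> /forallP SE]; apply/forallP=> e.
by apply/implyP=> eS; move/implyP: (SE e) => /(_ eS); rewrite inE => /andP[].
Qed.

Lemma triangle_card E S : S \in triangles E -> #|S| = 3.
Proof. by rewrite inE => /andP[/eqP]. Qed.

Lemma triangle_edge E S x y : S \in triangles E -> x \in S -> y \in S -> x != y ->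
  [set x; y] \in E.
Proof.
rewrite inE => /andP[_ /forallP/(_ [set x; y])] SE xS yS xy.
by apply: (implyP SE); rewrite cards2 xy eqxx andbT subUset !sub1set xS yS.
Qed.

Lemma set3_triangle E x y z : x != y -> x != z -> y != z ->
  [set x; y] \in E -> [set x; z] \in E -> [set y; z] \in E -> [set x; y; z] \in triangles E.
Proof.
move=> xy xz yz Exy Exz Eyz; rewrite inE cards3 //=; apply/forallP=> e.
apply/implyP=> /andP[eS /cards2P[p [q [pq e_pq]]]].
move: eS pq; rewrite e_pq subUset !sub1set !inE -!orbA => /andP[].
by do 2 case/or3P=> /eqP->; rewrite ?eqxx // => _; rewrite // setUC.
Qed.

Lemma card_del_vertices_triangles_lt E S : S \in triangles E ->
  #|triangles (del_vertices E S)| < #|triangles E|.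
Proof.
move=> tS; apply: proper_card; rewrite properEneq del_vertices_triangles andbT.
have /eqP/cards3P[x [y [z [xy _ _ eS]]]] := triangle_card tS.
have xS : x \in S by rewrite eS !inE eqxx.
have yS : y \in S by rewrite eS !inE eqxx orbT.
apply/eqP=> eq_tr; move: tS; rewrite -eq_tr => /triangle_edge/(_ xS yS xy).
by rewrite inE => /andP[_ /disjointFr/(_ (set21 x y))]; rewrite xS.
Qed.

Lemma triangles_at_sub E x y : triangles_at E x y \subset triangles E.
Proof. by apply/subsetP=> S; rewrite inE => /andP[]. Qed.

Lemma triangles_atC E x y : triangles_at E x y = triangles_at E y x.
Proof. by rewrite /triangles_at setUC. Qed.

Lemma triangles_atI E S x y z : S \in triangles E -> x \in S -> y \in S -> z \in S ->
  x != y -> x != z -> y != z -> triangles_at E x y :&: triangles_at E x z = [set S].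
Proof.
move=> tS xS yS zS xy xz yz; apply/setP=> S'; rewrite in_set1.
apply/setIP/eqP=> [[/setIdP[tS' +] /setIdP[_ +]]|->].
  rewrite !subUset !sub1set => /andP[xS' yS'] /andP[_ zS'].
  have le3 R : R \in triangles E -> #|R| <= 3 by move/triangle_card->.
  by rewrite (eq_set3_card (le3 _ tS) xS yS zS) ?(eq_set3_card (le3 _ tS') xS' yS' zS').
by split; apply/setIdP; rewrite tS subUset !sub1set ?xS ?yS ?zS.
Qed.

Section SimpleGraphBounds.
Variables (E : {set {set T}}) (V : {set T}).
Hypotheses (simpleE : simple E) (EV : edges_within E V).

Lemma card_nbrI_le x y : [set x; y] \in E ->
  #|nbr E x :&: nbr E y| <= #|triangles_at E x y|.
Proof.
move=> Exy; have xy := edge_neq simpleE Exy.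
rewrite -(@card_in_imset _ _ (fun w => [set x; y; w])) => [|w1 w2]; last first.
  rewrite !inE => /andP[/(edge_neq simpleE) xw1 /(edge_neq simpleE) yw1] _ eq12.
  have : w1 \in [set x; y; w2] by rewrite -eq12 !inE eqxx orbT.
  by rewrite !inE eq_sym (negbTE xw1) eq_sym (negbTE yw1) => /eqP.
apply/subset_leq_card/subsetP=> _ /imsetP[w /setIP[xw yw] ->].
rewrite !inE in xw yw; apply/setIdP; split; last exact: subsetUl.
by rewrite set3_triangle // (edge_neq simpleE).
Qed.

Lemma card_nbr2_le x y : [set x; y] \in E ->
  #|nbr E x| + #|nbr E y| <= #|V| + #|triangles_at E x y|.
Proof.
move=> Exy; rewrite -cardsUI leq_add ?card_nbrI_le //.
by apply: subset_leq_card; rewrite subUset !nbr_sub.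
Qed.

Lemma card_edges_meeting2 x y : [set x; y] \in E ->
  #|edges_meeting E [set x; y]| + 1 = #|nbr E x| + #|nbr E y|.
Proof.
move=> Exy; rewrite edges_meetingU !edges_meeting1 -!card_edges_at //.
by rewrite -cardsUI edges_atI // cards1.
Qed.

Lemma card_edges_del_edge x y : [set x; y] \in E ->
  #|E| + 1 <= #|del_vertices E [set x; y]| + #|V| + #|triangles_at E x y|.
Proof.
move=> Exy; rewrite (card_del_vertices E [set x; y]) -!addnA card_edges_meeting2 //.
by rewrite leq_add2l card_nbr2_le.
Qed.

Section DeleteTriangle.
Variables x y z : T.
Hypotheses (xy : x != y) (xz : x != z) (yz : y != z).
Hypothesis triangle_xyz : [set x; y; z] \in triangles E.

Let xS : x \in [set x; y; z]. Proof. by rewrite !inE eqxx. Qed.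
Let yS : y \in [set x; y; z]. Proof. by rewrite !inE eqxx orbT. Qed.
Let zS : z \in [set x; y; z]. Proof. by rewrite !inE eqxx orbT. Qed.
Let Exy := triangle_edge triangle_xyz xS yS xy.
Let Exz := triangle_edge triangle_xyz xS zS xz.
Let Eyz := triangle_edge triangle_xyz yS zS yz.

Lemma triangle_sub : [set x; y; z] \subset V.
Proof. by rewrite subUset (EV Exy) sub1set (subsetP (EV Exz)) ?set22. Qed.

Lemma card_edges_meeting3 :
  #|edges_meeting E [set x; y; z]| + 3 = #|nbr E x| + #|nbr E y| + #|nbr E z|.
Proof.
rewrite !edges_meetingU !edges_meeting1 -!card_edges_at //.
have := cardsU3 (edges_at E x) (edges_at E y) (edges_at E z).
rewrite !edges_atI // !cards1.
suff -> : [set [set x; y]] :&: edges_at E z = set0.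
  by rewrite cards0 addn0 => <-; rewrite -!addnA.
apply/setP=> e; rewrite !inE; apply/negP=> /andP[/eqP-> /andP[_]].
by rewrite !inE ![z == _]eq_sym (negbTE xz) (negbTE yz).
Qed.

Lemma card_nbr3_le :
  #|nbr E x| + #|nbr E y| + #|nbr E z| <=
  #|V| + (#|triangles_at E x y| + (#|triangles_at E x z| + #|triangles_at E y z|)).
Proof.
apply: leq_trans (leq_addr #|nbr E x :&: nbr E y :&: nbr E z| _) _.
rewrite -cardsU3 -!addnA !leq_add ?card_nbrI_le //.
by apply: subset_leq_card; rewrite !subUset !nbr_sub.
Qed.

Lemma card_triangles_at3_le :
  #|triangles_at E x y| + (#|triangles_at E x z| + #|triangles_at E y z|) <=
  #|triangles E| + 2.
Proof.
have trU_le : #|triangles_at E x y :|: triangles_at E x z :|: triangles_at E y z|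
    <= #|triangles E|.
  by apply: subset_leq_card; rewrite !subUset !triangles_at_sub.
have S_at a b : a \in [set x; y; z] -> b \in [set x; y; z] ->
    [set x; y; z] \in triangles_at E a b.
  by move=> aS bS; apply/setIdP; rewrite triangle_xyz subUset !sub1set aS bS.
have triple_gt0 :
    0 < #|triangles_at E x y :&: triangles_at E x z :&: triangles_at E y z|.
  by apply/card_gt0P; exists [set x; y; z]; rewrite !in_setI !S_at.
have := cardsU3 (triangles_at E x y) (triangles_at E x z) (triangles_at E y z).
have -> : #|triangles_at E x y :&: triangles_at E x z| = 1.
  by rewrite (triangles_atI _ xS yS zS) ?cards1.
have -> : #|triangles_at E x y :&: triangles_at E y z| = 1.
  by rewrite triangles_atC (triangles_atI _ yS xS zS) ?cards1 // eq_sym.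
have -> : #|triangles_at E x z :&: triangles_at E y z| = 1.
  by rewrite !(triangles_atC _ _ z) (triangles_atI _ zS xS yS) ?cards1 // eq_sym.
set triple := #|_ :&: _ :&: _|.
rewrite -!addnA => eqU; rewrite -(leq_add2r triple) -!addnA -eqU.
by apply: leq_add trU_le _; rewrite ltnS.
Qed.

Lemma card_edges_del_triangle :
  #|E| + 1 <= #|del_vertices E [set x; y; z]| + #|V| + #|triangles E|.
Proof.
rewrite (card_del_vertices E [set x; y; z]) -!addnA leq_add2l -(leq_add2r 2) -addnA.
rewrite card_edges_meeting3; apply: leq_trans card_nbr3_le _.
by rewrite -addnA leq_add2l card_triangles_at3_le.
Qed.

End DeleteTriangle.

End SimpleGraphBounds.

Lemma mantel V E : simple E -> edges_within E V -> triangles E = set0 ->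
  #|E| <= #|V| ^ 2 %/ 4.
Proof.
have [n] := ubnP #|V|; elim: n => // n IHn in V E *.
rewrite ltnS => Vn simpleE EV noTri.
have [->|/set0Pn[e Ee]] := eqVneq E set0; first by rewrite cards0.
have /eqP/cards2P[x [y [xy e_xy]]] := simpleE _ Ee; subst e.
have xyV : [set x; y] \subset V := EV _ Ee.
have V_ge2 : 2 <= #|V| by have := subset_leq_card xyV; rewrite cards2 xy.
have cardV' : #|V :\: [set x; y]| = #|V| - 2.
  by rewrite cardsD (setIidPr xyV) cards2 xy.
have noTri' : triangles (del_vertices E [set x; y]) = set0.
  by apply/eqP; rewrite -subset0 -noTri del_vertices_triangles.
have no_xy : #|triangles_at E x y| = 0.
  by apply/eqP; rewrite cards_eq0 -subset0 -noTri triangles_at_sub.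
have := IHn _ _ _ (del_vertices_simple simpleE) (del_vertices_within EV) noTri'.
rewrite cardV' -(sqr_sub2_div4 V_ge2) => /(_ ltac:(lia)).
have := card_edges_del_edge simpleE EV Ee; rewrite no_xy.
move: ((#|V| - 2) ^ 2 %/ 4) => q; lia.
Qed.

Lemma card_edges_le_few_triangles V E : simple E -> edges_within E V ->
  0 < #|triangles E| -> 3 * #|triangles E| + 4 <= #|V| ->
  #|E| <= (#|V| - 1) ^ 2 %/ 4 + #|triangles E| + 1.
Proof.
have [n] := ubnP #|V|; elim: n => // n IHn in V E *.
rewrite ltnS => Vn simpleE EV t_gt0 V_ge.
have /card_gt0P[S tS] := t_gt0.
have t'_lt := card_del_vertices_triangles_lt tS.
have /eqP/cards3P[x [y [z [xy xz yz eS]]]] := triangle_card tS; subst S.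
have cardV' : #|V :\: [set x; y; z]| = #|V| - 3.
  by rewrite cardsD (setIidPr (triangle_sub EV xy xz tS)) cards3.
have := card_edges_del_triangle simpleE EV xy xz yz tS.
have simpleE' := del_vertices_simple (X := [set x; y; z]) simpleE.
have E'V' := del_vertices_within (X := [set x; y; z]) EV.
have [noTri'|t'_gt0] := posnP #|triangles (del_vertices E [set x; y; z])|.
  have := mantel simpleE' E'V' (cards0_eq noTri'); rewrite cardV'.
  have := sqr_sub2_div4 (m := #|V| - 1); rewrite -subnDA => /(_ ltac:(lia)).
  move: ((#|V| - 3) ^ 2 %/ 4) ((#|V| - 1) ^ 2 %/ 4) => q Q; lia.
have := IHn _ _ _ simpleE' E'V' t'_gt0; rewrite cardV' -subnDA.
move=> /(_ ltac:(lia) ltac:(lia)).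
have := sqr_sub4_div4_le V_ge.
move: ((#|V| - 4) ^ 2 %/ 4) ((#|V| - 1) ^ 2 %/ 4) => q Q; lia.
Qed.

Implicit Types (A B K W : {set T}) (u v : T).

Definition complete_bipartite A B := [set [set p.1; p.2] | p in setX A B].
Definition star v W := [set [set v; w] | w in W].

Lemma card_star v W : #|star v W| = #|W|.
Proof. by rewrite card_imset //; apply: set2_inj. Qed.

Lemma complete_bipartite_edge A B x y : [disjoint A & B] ->
  [set x; y] \in complete_bipartite A B -> (x \in A) != (y \in A).
Proof.
move=> AB /imsetP[[a b] /setXP[/= aA bB] eq_xy].
have bA : b \in A = false by rewrite (disjointFl AB bB).
have [ax bx] : a \in [set x; y] /\ b \in [set x; y] by rewrite eq_xy set21 set22.
move: aA bA; case/set2P: ax => ->; case/set2P: bx => ->.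
all: by move=> ->; case: (x \in A); case: (y \in A).
Qed.

Lemma card_complete_bipartite A B : [disjoint A & B] ->
  #|complete_bipartite A B| = #|A| * #|B|.
Proof.
move=> AB; rewrite card_in_imset ?cardsX // => -[a1 b1] [a2 b2].
move=> /setXP[/= a1A b1B] /setXP[/= a2A b2B] /= eq12.
have /set2P[a12|a1b2] : a1 \in [set a2; b2] by rewrite -eq12 set21.
  have /set2P[b1a2|->] : b1 \in [set a2; b2] by rewrite -eq12 set22.
    by rewrite -b1a2 (disjointFl AB b1B) in a2A.
  by rewrite a12.
by rewrite a1b2 (disjointFl AB b2B) in a1A.
Qed.

Section BipartitePlusVertex.
Variables (v u : T) (A B K : {set T}).
Hypotheses (vA : v \notin A) (vB : v \notin B) (AB : [disjoint A & B]).
Hypotheses (uA : u \in A) (KB : K \subset B).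

Definition bipartite_plus_vertex :=
  complete_bipartite A B :|: star v (u |: K).
Local Notation G := bipartite_plus_vertex.

Let uK : u \notin K.
Proof. by apply: contraL uA => /(subsetP KB) /(disjointFl AB) ->. Qed.

Lemma v_notin_complete_bipartite e : e \in complete_bipartite A B -> v \notin e.
Proof.
case/imsetP=> -[a b] /setXP[/= aA bB] ->.
by rewrite !inE negb_or ![v == _]eq_sym (memPn vA) ?(memPn vB).
Qed.

Lemma in_A_star_nbr w : w \in u |: K -> (w \in A) = (w == u).
Proof.
case/setU1P=> [->|wK]; first by rewrite uA eqxx.
rewrite (disjointFl AB (subsetP KB w wK)); apply/esym/eqP=> wu.
by move: uA; rewrite -wu (disjointFl AB (subsetP KB w wK)).
Qed.

Lemma v_neq_star_nbr w : w \in u |: K -> v != w.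
Proof.
case/setU1P=> [->|/(subsetP KB) wB]; rewrite eq_sym.
  exact: (memPn vA).
exact: (memPn vB).
Qed.

Lemma card_bipartite_plus_vertex : #|G| = #|A| * #|B| + #|K|.+1.
Proof.
have disj : [disjoint complete_bipartite A B & star v (u |: K)].
  apply/pred0P=> e /=; apply/negbTE/andP=> -[/v_notin_complete_bipartite vNe].
  by case/imsetP=> w _ e_vw; rewrite e_vw set21 in vNe.
have := cardsUI (complete_bipartite A B) (star v (u |: K)).
rewrite disjoint_setI0 // cards0 addn0 => ->.
by rewrite card_complete_bipartite // card_star cardsU1 uK.
Qed.

Lemma simple_bipartite_plus_vertex : simple G.
Proof.
move=> e /setUP[e_bip|/imsetP[w wK ->]]; last by rewrite cards2 v_neq_star_nbr.
case/imsetP: (e_bip) => -[a b] _ e_ab; rewrite e_ab /= in e_bip *.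
have ab : a != b.
  by apply: contraTneq (complete_bipartite_edge AB e_bip) => ->; rewrite eqxx.
by rewrite cards2 ab.
Qed.

Lemma bipartite_plus_vertex_edge x y : [set x; y] \in G -> x != v -> y != v ->
  (x \in A) != (y \in A).
Proof.
move=> /setUP[/(complete_bipartite_edge AB)//|/imsetP[w _ e_vw]] xv yv.
have : v \in [set x; y] by rewrite e_vw set21.
by rewrite !inE ![v == _]eq_sym (negbTE xv) (negbTE yv).
Qed.

Lemma bipartite_plus_vertex_nbr y : [set v; y] \in G -> y \in u |: K.
Proof.
by case/setUP=> [/v_notin_complete_bipartite|/imsetP[w wK /set2_inj->//]]; rewrite set21.
Qed.

Lemma v_in_triangle S : S \in triangles G -> v \in S.
Proof.
move=> tS; apply: contraT => vNS.
have /eqP/cards3P[a [b [c [ab ac bc eS]]]] := triangle_card tS.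
have crossing p q : p \in S -> q \in S -> p != q -> (p \in A) != (q \in A).
  move=> pS qS pq; apply: bipartite_plus_vertex_edge (triangle_edge tS pS qS pq) _ _.
    by apply: contraNneq vNS => <-.
  by apply: contraNneq vNS => <-.
have [aS bS cS] : [/\ a \in S, b \in S & c \in S] by rewrite eS !inE !eqxx ?orbT.
move: (crossing _ _ aS bS ab) (crossing _ _ aS cS ac) (crossing _ _ bS cS bc).
by case: (a \in A); case: (b \in A); case: (c \in A).
Qed.

Lemma triangles_bipartite_plus_vertex : triangles G = [set [set v; u; w] | w in K].
Proof.
apply/setP=> S; apply/idP/imsetP=> [tS|[w wK ->]]; last first.
  have wB : w \in B := subsetP KB w wK.
  apply: set3_triangle; rewrite ?v_neq_star_nbr ?setU11 ?setU1r //.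
  - by apply: contraNneq uK => ->.
  - by apply/setUP; right; apply/imsetP; exists u; rewrite ?setU11.
  - by apply/setUP; right; apply/imsetP; exists w; rewrite ?setU1r.
  - by apply/setUP; left; apply/imsetP; exists (u, w); rewrite ?inE ?uA.
have vS := v_in_triangle tS.
have /cards2P[y [z [yz eS']]] : #|S :\ v| == 2.
  by move: (triangle_card tS); rewrite (cardsD1 v) vS add1n => -[->].
have /setD1P[yv yS] : y \in S :\ v by rewrite eS' set21.
have /setD1P[zv zS] : z \in S :\ v by rewrite eS' set22.
have eS : S = [set v; y; z] by rewrite -(setD1K vS) eS' setUA.
have nbr_v p : p \in S -> p != v -> p \in u |: K.
  by move=> pS pv; rewrite bipartite_plus_vertex_nbr // (triangle_edge tS vS pS) // eq_sym.
have yK := nbr_v _ yS yv; have zK := nbr_v _ zS zv.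
have := bipartite_plus_vertex_edge (triangle_edge tS yS zS yz) yv zv.
rewrite !in_A_star_nbr //; case: (eqVneq y u) (eqVneq z u) => [yu|yu] [zu|zu] //= _.
  by exists z; [case/setU1P: zK zu => [->|//]; rewrite eqxx | rewrite eS yu].
by exists y; [case/setU1P: yK yu => [->|//]; rewrite eqxx | rewrite eS zu setUAC].
Qed.

Lemma card_triangles_bipartite_plus_vertex : #|triangles G| = #|K|.
Proof.
rewrite triangles_bipartite_plus_vertex card_in_imset // => w1 w2 w1K w2K eq12.
have : w1 \in [set v; u; w2] by rewrite -eq12 !inE eqxx orbT.
rewrite !inE -orbA => /or3P[/eqP w1v|/eqP w1u|/eqP //].
  by move: (v_neq_star_nbr (setU1r u w1K)); rewrite w1v eqxx.
by move: uK; rewrite -w1u w1K.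
Qed.

End BipartitePlusVertex.

Lemma exists_graph_triangles k : 3 <= #|T| -> k <= #|T| - 1 - (#|T| - 1) %/ 2 ->
  exists E : {set {set T}},
    [/\ simple E, #|triangles E| = k & #|E| = (#|T| - 1) ^ 2 %/ 4 + k + 1].
Proof.
move=> T_ge3 k_le; have /card_gt0P[v _] : 0 < #|T| by lia.
have cardW : #|[set~ v]| = #|T| - 1 by rewrite cardsC1 subn1.
have [A Av' cardA] : exists2 A : {set T}, A \subset [set~ v] & #|A| = (#|T| - 1) %/ 2.
  by apply: exists_subset_card; rewrite cardW leq_div.
set B := [set~ v] :\: A.
have cardB : #|B| = #|T| - 1 - (#|T| - 1) %/ 2.
  by rewrite cardsD (setIidPr Av') cardW cardA.
have [K KB cardK] : exists2 K : {set T}, K \subset B & #|K| = k.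
  by apply: exists_subset_card; rewrite cardB.
have /card_gt0P[u uA] : 0 < #|A| by rewrite cardA; lia.
have vA : v \notin A by apply/negP=> /(subsetP Av'); rewrite !inE eqxx.
have vB : v \notin B by rewrite !inE eqxx andbF.
have AB : [disjoint A & B] by rewrite disjoints_subset setCD subsetUr.
exists (bipartite_plus_vertex v u A B K); split.
- exact: simple_bipartite_plus_vertex.
- by rewrite card_triangles_bipartite_plus_vertex.
by rewrite card_bipartite_plus_vertex // cardA cardB cardK half_mul_uphalf_sub addnS addn1.
Qed.

End Graphs.

Lemma simple_graphP n (E : {set {set 'I_n}}) : reflect (simple E) (simple_graph E).
Proof. by apply: (iffP forall_inP) => simpleE e /simpleE /eqP. Qed.

Lemma ntrianglesE n (E : {set {set 'I_n}}) : ntriangles E = #|triangles E|.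
Proof. by []. Qed.

Lemma exa_K3_le k n : 0 < k -> 3 * k + 4 <= n -> exa_K3 k n <= (n - 1) ^ 2 %/ 4 + k + 1.
Proof.
move=> k_gt0 n_ge; apply/bigmax_leqP => E /andP[/simple_graphP simpleE].
rewrite ntrianglesE => /eqP tE.
have := @card_edges_le_few_triangles _ [set: 'I_n] E simpleE.
by rewrite cardsT card_ord tE; apply.
Qed.

Lemma exa_K3_ge k n : 3 <= n -> k <= n - 1 - (n - 1) %/ 2 ->
  (n - 1) ^ 2 %/ 4 + k + 1 <= exa_K3 k n.
Proof.
move=> n_ge3 k_le; have := @exists_graph_triangles 'I_n k; rewrite card_ord.
move=> /(_ n_ge3 k_le) [E [simpleE tE <-]].
apply: (@leq_bigmax_cond _ _ (@nedges n)).
by rewrite ntrianglesE tE eqxx andbT; apply/simple_graphP.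
Qed.

Theorem theorem1p5 :
  forall k : nat, 0 < k ->
  exists n0 : nat, forall n : nat, n0 <= n ->
    exa_K3 k n = (n - 1) ^ 2 %/ 4 + k + 1.
Proof.
move=> k k_gt0; exists (3 * k + 4) => n n_ge.
by apply/eqP; rewrite eqn_leq exa_K3_le ?exa_K3_ge //; lia.
Qed.
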